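(* The property that the path metric of the Cayley graph is conditionally strictly negative definite is not stable under amalgamated free products: there exist groups $\Gamma_1,\Gamma_2$ with generating sets $S_1,S_2$ and a common subgroup $H$ such that the path metrics on $\mathrm{Cay}(\Gamma_1,S_1)$ and $\mathrm{Cay}(\Gamma_2,S_2)$ are conditionally strictly negative definite, while the path metric on $\mathrm{Cay}(\Gamma_1\ast_H\Gamma_2,S_1\cup S_2)$ is not.
   Context: $\Gamma_1\ast_H\Gamma_2$ is the amalgamated free product. $\mathrm{Cay}(\Gamma,S)$ is the graph with vertex set $\Gamma$ and edges $\{g,gs\}$, $s\in S\cup S^{-1}$, $gs\neq g$; its path metric is the shortest-path distance. A symmetric real function $K$ on $\Gamma\times\Gamma$ is conditionally strictly negative definite if for every finitely supported $\lambda\colon\Gamma\to\mathbb{C}$, $\lambda\neq0$, with $\sum_g\lambda(g)=0$ one has $\sum_{g,h}\lambda(g)\overline{\lambda(h)}K(g,h)<0$. *)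

From HB Require Import structures.
From Stdlib Require Import Reals ClassicalEpsilon.
From mathcomp Require Import all_boot all_order all_algebra.
From mathcomp Require Import Rstruct.
From mathcomp.real_closed Require Import complex.
Set Implicit Arguments. Unset Strict Implicit. Unset Printing Implicit Defensive.
Import Order.TTheory GRing.Theory Num.Theory.

Record group := Group {
  carrier :> Type;
  gmul : carrier -> carrier -> carrier;
  gone : carrier;
  ginv : carrier -> carrier;
  gmulA : forall x y z, gmul x (gmul y z) = gmul (gmul x y) z;
  gmul1 : forall x, gmul gone x = x;
  gmulV : forall x, gmul (ginv x) x = gone
}.

Definition is_hom (G K : group) (f : G -> K) : Prop :=
  forall x y, f (gmul x y) = gmul (f x) (f y).

Inductive in_gen (G : group) (S : G -> Prop) : G -> Prop :=
| in_gen_one : in_gen S (gone G)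
| in_gen_mulS : forall g s, in_gen S g -> S s -> in_gen S (gmul g s)
| in_gen_mulSV : forall g s, in_gen S g -> S s -> in_gen S (gmul g (ginv s)).

Definition generates (G : group) (S : G -> Prop) : Prop :=
  forall g : G, in_gen S g.

Definition cayley_adj (G : group) (S : G -> Prop) (g h : G) : Prop :=
  g <> h /\ exists s, S s /\ (h = gmul g s \/ h = gmul g (ginv s)).

Inductive walk (G : group) (S : G -> Prop) : nat -> G -> G -> Prop :=
| walk0 : forall g, walk S 0 g g
| walkS : forall n g h k, cayley_adj S g h -> walk S n h k -> walk S n.+1 g k.

(* shortest-path distance (well defined when S generates G) *)
Definition path_metric (G : group) (S : G -> Prop) (g h : G) : nat :=
  epsilon (inhabits 0%N)
    (fun n => walk S n g h /\ forall m, walk S m g h -> (n <= m)%N).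

Local Open Scope ring_scope.
(* A finitely supported lambda : G -> C is given by finitely many distinct
   points x_0..x_{n-1} (x injective) carrying the values c_0..c_{n-1}. *)
Definition cond_strict_neg_def (G : group) (K : G -> G -> R) : Prop :=
  (forall g h, K g h = K h g) /\
  forall (n : nat) (x : 'I_n -> G) (c : 'I_n -> R[i]),
    injective x ->
    (exists i, c i != 0) ->
    \sum_(i < n) c i = 0 ->
    \sum_(i < n) \sum_(j < n) c i * (c j)^* * ((K (x i) (x j))%:C)%C < 0.

Definition path_metric_CSND (G : group) (S : G -> Prop) : Prop :=
  cond_strict_neg_def (fun g h => ((path_metric S g h)%:R : R)).

Definition is_amalgam (H G1 G2 : group) (j1 : H -> G1) (j2 : H -> G2)
    (A : group) (i1 : G1 -> A) (i2 : G2 -> A) : Prop :=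
  [/\ is_hom i1, is_hom i2, (forall h, i1 (j1 h) = i2 (j2 h)) &
    forall (K : group) (f1 : G1 -> K) (f2 : G2 -> K),
      is_hom f1 -> is_hom f2 -> (forall h, f1 (j1 h) = f2 (j2 h)) ->
      exists f : A -> K, [/\ is_hom f, (forall x, f (i1 x) = f1 x),
        (forall x, f (i2 x) = f2 x) &
        forall f' : A -> K, is_hom f' -> (forall x, f' (i1 x) = f1 x) ->
          (forall x, f' (i2 x) = f2 x) -> forall a, f' a = f a]].

Definition amalgam_gens (G1 G2 A : group) (i1 : G1 -> A) (i2 : G2 -> A)
    (S1 : G1 -> Prop) (S2 : G2 -> Prop) : A -> Prop :=
  fun a => (exists s, S1 s /\ a = i1 s) \/ (exists s, S2 s /\ a = i2 s).

(* Take Γ1 = Γ2 = Z/6 with all elements as generators and H = Z/3 embedded as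
   the even residues. A complete Cayley graph carries the discrete metric, which
   is conditionally strictly negative definite. In Z/6 *_{Z/3} Z/6, however,
   the points of H together with the odd residues of either factor form two
   cliques sharing H, while an odd point of one factor is at distance 2 from an
   odd point of the other: mapping the factors onto the subgroups generated by
   two different reflections of the dihedral group of order 6 shows that their
   quotient is a rotation, hence not a generator. Weights -2 on H and 1 on the
   six odd points then give the quadratic form 24 - 72 + 6 + 6 + 36 = 0. *)
From Pilot Require Import Defs.
From Stdlib Require Import Reals ClassicalEpsilon Classical.
From mathcomp Require Import all_boot all_order all_algebra.
From mathcomp Require Import Rstruct.
From mathcomp.real_closed Require Import complex.
Set Implicit Arguments. Unset Strict Implicit. Unset Printing Implicit Defensive.
Import Order.TTheory GRing.Theory Num.Theory.

Section GroupFacts.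
Variable G : group.
Implicit Types x y : G.

Lemma gmulrV x : gmul x (ginv x) = gone G.
Proof.
have -> : gmul x (ginv x)
    = gmul (gmul (ginv (gmul x (ginv x))) (gmul x (ginv x))) (gmul x (ginv x)).
  by rewrite gmulV gmul1.
rewrite -gmulA -[gmul (gmul x (ginv x)) (gmul x (ginv x))]gmulA.
by rewrite [gmul (ginv x) (gmul x (ginv x))]gmulA gmulV gmul1 gmulV.
Qed.

Lemma gmulr1 x : gmul x (gone G) = x.
Proof. by rewrite -(gmulV x) gmulA gmulrV gmul1. Qed.

Lemma gmulI x : injective (gmul x).
Proof. by move=> y z e; rewrite -(gmul1 y) -(gmul1 z) -(gmulV x) -!gmulA e. Qed.

End GroupFacts.

Lemma hom1 (G K : group) (f : G -> K) : is_hom f -> f (gone G) = gone K.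
Proof. by move=> hf; apply: (@gmulI _ (f (gone G))); rewrite -hf gmul1 gmulr1. Qed.

Lemma homV (G K : group) (f : G -> K) x : is_hom f -> f (ginv x) = ginv (f x).
Proof. by move=> hf; apply: (@gmulI _ (f x)); rewrite -hf !gmulrV hom1. Qed.

Section PathMetric.
Variables (G : group) (S : G -> Prop).
Implicit Types g h k : G.

Lemma walk0_eq g h : walk S 0 g h -> g = h.
Proof. by move=> w; inversion w. Qed.

Lemma walk1_adj g h : walk S 1 g h -> cayley_adj S g h.
Proof. by move=> w; inversion w; subst; move/walk0_eq: H1 => <-. Qed.

Lemma path_metric_eq g h n :
  walk S n g h -> (forall m, walk S m g h -> (n <= m)%N) -> path_metric S g h = n.
Proof.
move=> w min_n; have [] := epsilon_spec (inhabits 0%N)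
  (fun n => walk S n g h /\ forall m, walk S m g h -> (n <= m)%N) (ex_intro _ n (conj w min_n)).
by rewrite -/(path_metric S g h) => wd min_d; apply/eqP; rewrite eqn_leq min_d // min_n.
Qed.

Lemma path_metric_refl g : path_metric S g g = 0%N.
Proof. exact: path_metric_eq (walk0 _ _) _. Qed.

Lemma path_metric_adj g h : cayley_adj S g h -> path_metric S g h = 1%N.
Proof.
move=> a; apply: path_metric_eq (walkS a (walk0 _ _)) _.
by case=> // /walk0_eq; case: a.
Qed.

Lemma path_metric_eq2 g k h : cayley_adj S g k -> cayley_adj S k h ->
  ~ (g = h \/ cayley_adj S g h) -> path_metric S g h = 2%N.
Proof.
move=> a1 a2 far; apply: path_metric_eq (walkS a1 (walkS a2 (walk0 _ _))) _.
by case=> [/walk0_eq|[/walk1_adj|//]]; tauto.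
Qed.

End PathMetric.

Lemma hom_not_eq_adj (A K : group) (S : A -> Prop) (F : A -> K) (P : K -> Prop) x y :
  is_hom F -> (forall s, S s -> P (F s)) -> (forall k, P k -> P (ginv k)) ->
  P (gone K) -> ~ P (gmul (ginv (F x)) (F y)) -> ~ (x = y \/ cayley_adj S x y).
Proof.
move=> hF SP PV P1 nP [xy|[_ [s [Ss E]]]]; first by move: nP; rewrite xy gmulV.
apply: nP; case: E => ->; rewrite hF gmulA gmulV gmul1; first exact: SP.
by rewrite homV //; apply/PV/SP.
Qed.

Lemma cayley_adj_image (G A : group) (i : G -> A) (S : A -> Prop) g h :
  is_hom i -> injective i -> (forall g, S (i g)) -> g <> h ->
  cayley_adj S (i g) (i h).
Proof.
move=> hi ii Si ne; split; first by move/ii.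
exists (i (gmul (ginv g) h)); split=> //; left.
by rewrite -hi gmulA gmulrV gmul1.
Qed.

Local Open Scope ring_scope.

Section DiscreteMetric.
Variable G : group.

Lemma generates_full : generates (fun _ : G => True).
Proof. by move=> g; rewrite -(gmul1 g); apply: in_gen_mulS (in_gen_one _) _. Qed.

Lemma path_metric_full (g h : G) : g <> h -> path_metric (fun _ => True) g h = 1%N.
Proof.
move=> ne; apply: path_metric_adj; split=> //.
by exists (gmul (ginv g) h); split=> //; left; rewrite gmulA gmulrV gmul1.
Qed.

Lemma path_metric_CSND_full : path_metric_CSND (fun _ : G => True).
Proof.
split=> [g h|n x c x_inj [i0 ci0] sum_c].
  have [->|ne] := classic (g = h); first by [].
  by rewrite !path_metric_full // => /esym.
have dE i j : (((path_metric (fun _ => True) (x i) (x j))%:R : R)%:C)%C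
    = ((i != j)%:R : R[i]).
  rewrite rmorph_nat; have [->|ne] := eqVneq i j; first by rewrite path_metric_refl.
  by rewrite path_metric_full // => /x_inj eij; rewrite eij eqxx in ne.
(* The form equals |sum c|^2 - sum |c_i|^2 = - sum |c_i|^2. *)
have row i : \sum_(j < n) c i * (c j)^* * ((i != j)%:R : R[i])
    = c i * (\sum_(j < n) c j)^* - c i * (c i)^*.
  rewrite (bigD1 i) //= eqxx mulr0 add0r rmorph_sum mulr_sumr [in RHS](bigD1 i) //=.
  rewrite addrC addrK; apply: eq_bigr => j; rewrite eq_sym => ->.
  by rewrite mulr1.
under eq_bigr => i _ do
  (under eq_bigr => j _ do rewrite dE; rewrite row sum_c rmorph0 mulr0 add0r).
rewrite sumrN oppr_lt0 (bigD1 i0) //=; apply: ltr_wpDr.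
  by apply: sumr_ge0 => i _; rewrite -normCK exprn_ge0.
by rewrite -normCK exprn_gt0 // normr_gt0.
Qed.

End DiscreteMetric.

Lemma amalgam_diag_inj (H G A : group) (j : H -> G) (i1 i2 : G -> A) :
  is_amalgam j j i1 i2 -> injective i1 /\ injective i2.
Proof.
case=> _ _ _ univ.
have [F [_ Fi1 Fi2 _]] := univ G id id (fun _ _ => erefl) (fun _ _ => erefl) (fun _ => erefl).
by split; apply: (can_inj (g := F)).
Qed.

Ltac case_Z3 x := case: x => [[|[|[|//]]] ?].
Ltac case_Z6 x := case: x => [[|[|[|[|[|[|//]]]]]] ?].

Definition Z6 : group := @Defs.Group 'Z_6 (fun x y => x + y) 0 (fun x => - x)
  (@addrA _) (@add0r _) (@addNr _).
Definition Z3 : group := @Defs.Group 'Z_3 (fun x y => x + y) 0 (fun x => - x)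
  (@addrA _) (@add0r _) (@addNr _).

Definition double (h : Z3) : Z6 := inZp (2 * h).

Lemma double_hom : is_hom double.
Proof. by move=> x y; apply/eqP; case_Z3 x; case_Z3 y; vm_compute. Qed.

Lemma double_inj : injective double.
Proof. by move=> x y /eqP e; apply/eqP; move: e; case_Z3 x; case_Z3 y; vm_compute. Qed.

Lemma odd_double h : odd (double h) = false.
Proof. by case_Z3 h. Qed.

Lemma even_Z6_double (z : Z6) : ~~ odd z -> exists h, z = double h.
Proof.
by case_Z6 z => // _; [exists 0 | exists 1 | exists 2]; apply/eqP; vm_compute.
Qed.

Lemma odd_Z6D (x y : Z6) : odd (gmul x y) = odd x (+) odd y.
Proof. by case_Z6 x; case_Z6 y. Qed.

Lemma parity_hom (K : group) (s : K) : gmul s s = gone K ->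
  is_hom (fun x : Z6 => if odd x then s else gone K).
Proof.
move=> ss x y; rewrite odd_Z6D.
by case: (odd x); case: (odd y); rewrite /= ?gmul1 ?gmulr1.
Qed.

(* The dihedral group of order 6 as Z/3 ⋊ Z/2; the boolean marks reflections. *)
Definition D3mul (x y : 'Z_3 * bool) : 'Z_3 * bool :=
  (x.1 + (if x.2 then - y.1 else y.1), x.2 (+) y.2).
Definition D3inv (x : 'Z_3 * bool) : 'Z_3 * bool := (if x.2 then x.1 else - x.1, x.2).
Definition D3one : 'Z_3 * bool := (0, false).

Ltac case_D3 x := let a := fresh "a" in let b := fresh "b" in case: x => a b; case_Z3 a; case: b.

Lemma D3mulA x y z : D3mul x (D3mul y z) = D3mul (D3mul x y) z.
Proof. by apply/eqP; case_D3 x; case_D3 y; case_D3 z; vm_compute. Qed.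

Lemma D3mul1 x : D3mul D3one x = x.
Proof. by apply/eqP; case_D3 x; vm_compute. Qed.

Lemma D3mulV x : D3mul (D3inv x) x = D3one.
Proof. by apply/eqP; case_D3 x; vm_compute. Qed.

Definition D3 : group := @Defs.Group ('Z_3 * bool) D3mul D3one D3inv D3mulA D3mul1 D3mulV.

Definition D3refl (k : 'Z_3) : D3 := (k, true).

Lemma D3refl_invol k : gmul (D3refl k) (D3refl k) = gone D3.
Proof. by rewrite /= /D3mul /= subrr. Qed.

Definition D3gens : seq ('Z_3 * bool) := [:: D3one; D3refl 0; D3refl 1].

Lemma D3gensV : {in D3gens, forall k, D3inv k \in D3gens}.
Proof. by apply/allP; vm_compute. Qed.

(* [(b, z)] stands for the residue [z] of the first ([b = false]) or second
   factor; even residues lie in the amalgamated subgroup and are represented in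
   the first factor only. *)
Definition canonical_rep (u : bool * Z6) : bool := odd u.2 || ~~ u.1.

Definition amalgam_dist (u v : bool * Z6) : nat :=
  if u == v then 0 else if (u.1 != v.1) && odd u.2 && odd v.2 then 2 else 1.

Definition test_pts : seq (bool * 'Z_6) :=
  [:: (false, 0); (false, 2); (false, 4); (false, 1); (false, 3); (false, 5);
      (true, 1); (true, 3); (true, 5)].

Definition weight (u : bool * Z6) : int := if odd u.2 then 1 else - 2%:Z.

Lemma test_pts_canonical : all canonical_rep test_pts.
Proof. by vm_compute. Qed.

Lemma test_pts_uniq : uniq test_pts.
Proof. by vm_compute. Qed.

Lemma weight_test_pts : \sum_(u <- test_pts) weight u = 0.
Proof. by rewrite unlock; vm_compute. Qed.

Lemma amalgam_dist_form_test_pts :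
  \sum_(u <- test_pts) \sum_(v <- test_pts) weight u * weight v * (amalgam_dist u v)%:Z = 0.
Proof. by rewrite unlock; vm_compute. Qed.

Section Amalgam.
Variables (A : group) (i1 i2 : Z6 -> A).
Hypothesis amalA : is_amalgam double double i1 i2.
Local Notation S := (amalgam_gens i1 i2 (fun _ => True) (fun _ => True)).

Lemma amalgam_adj1 g h : g <> h -> cayley_adj S (i1 g) (i1 h).
Proof.
have [hi1 _ _ _] := amalA; have [ii1 _] := amalgam_diag_inj amalA.
by apply: cayley_adj_image => // x; left; exists x.
Qed.

Lemma amalgam_adj2 g h : g <> h -> cayley_adj S (i2 g) (i2 h).
Proof.
have [_ hi2 _ _] := amalA; have [_ ii2] := amalgam_diag_inj amalA.
by apply: cayley_adj_image => // x; right; exists x.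
Qed.

Lemma amalgam_even (z : Z6) : ~~ odd z -> i1 z = i2 z.
Proof. by case/even_Z6_double => h ->; case: amalA. Qed.

Lemma amalgam_odd_far (p q : Z6) : odd p -> odd q ->
  path_metric S (i1 p) (i2 q) = 2%N /\ path_metric S (i2 q) (i1 p) = 2%N.
Proof.
move=> odd_p odd_q.
have [_ _ _ univ] := amalA.
have [F [hF Fi1 Fi2 _]] := univ D3 _ _ (parity_hom (D3refl_invol 0))
  (parity_hom (D3refl_invol 1)) (fun h => ltac:(by rewrite /= odd_double)).
have FS s : S s -> F s \in D3gens.
  by case=> -[r [_ ->]]; rewrite ?Fi1 ?Fi2; case: (odd r).
have far x y : F x = D3refl 0 -> F y = D3refl 1 ->
    ~ (x = y \/ cayley_adj S x y) /\ ~ (y = x \/ cayley_adj S y x).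
  move=> Fx Fy; split; apply: (hom_not_eq_adj hF FS D3gensV);
    rewrite ?Fx ?Fy; by vm_compute.
have Fp : F (i1 p) = D3refl 0 by rewrite Fi1 odd_p.
have Fq : F (i2 q) = D3refl 1 by rewrite Fi2 odd_q.
have [far_pq far_qp] := far _ _ Fp Fq.
have i12_0 : i1 0 = i2 0 by apply: amalgam_even.
have p_ne0 : p <> 0 by move=> p0; rewrite p0 in odd_p.
have q_ne0 : q <> 0 by move=> q0; rewrite q0 in odd_q.
split.
- apply: path_metric_eq2 (amalgam_adj1 p_ne0) _ far_pq.
  by rewrite i12_0; apply: amalgam_adj2; apply: nesym.
- apply: path_metric_eq2 (amalgam_adj2 q_ne0) _ far_qp.
  by rewrite -i12_0; apply: amalgam_adj1; apply: nesym.
Qed.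

Definition amalgam_pt (u : bool * Z6) : A := if u.1 then i2 u.2 else i1 u.2.

Lemma path_metric_amalgam_pt u v : canonical_rep u -> canonical_rep v ->
  path_metric S (amalgam_pt u) (amalgam_pt v) = amalgam_dist u v.
Proof.
rewrite /amalgam_dist; case: eqP => [<- _ _|]; first exact: path_metric_refl.
case: u v => [[] p] [[] q] /= ne; rewrite /canonical_rep /amalgam_pt /= ?orbF ?orbT.
- by move=> _ _; apply/path_metric_adj/amalgam_adj2 => pq; apply: ne; rewrite pq.
- move=> odd_p _; rewrite odd_p; case: ifP => [odd_q|/negbT even_q].
    by case: (amalgam_odd_far odd_q odd_p).
  rewrite amalgam_even //; apply/path_metric_adj/amalgam_adj2.
  by move=> pq; move: even_q; rewrite -pq odd_p.
- move=> _ odd_q; rewrite odd_q andbT; case: ifP => [odd_p|/negbT even_p].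
    by case: (amalgam_odd_far odd_p odd_q).
  rewrite amalgam_even //; apply/path_metric_adj/amalgam_adj2.
  by move=> pq; move: even_p; rewrite pq odd_q.
- by move=> _ _; apply/path_metric_adj/amalgam_adj1 => pq; apply: ne; rewrite pq.
Qed.

Lemma amalgam_not_CSND : ~ path_metric_CSND S.
Proof.
case=> _ csnd.
pose pt (i : 'I_9) := nth (false, 0) test_pts i.
pose c (i : 'I_9) : R[i] := (weight (pt i))%:~R.
have sum_pts (V : nmodType) (F : bool * Z6 -> V) :
    \sum_(i < 9) F (pt i) = \sum_(u <- test_pts) F u.
  by rewrite (big_nth (false, 0)) big_mkord.
have canon i : canonical_rep (pt i) by apply/(allP test_pts_canonical)/mem_nth.
have dist i j := path_metric_amalgam_pt (canon i) (canon j).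
have pt_inj : injective (amalgam_pt \o pt).
  move=> i j /= eij; apply/val_inj/eqP.
  rewrite -(nth_uniq (false, 0) _ _ test_pts_uniq) ?ltn_ord //.
  have := dist i j; rewrite eij path_metric_refl /amalgam_dist.
  by case: (pt i =P pt j) => [/eqP //|_]; case: ifP.
have c_nz : exists i, c i != 0 by exists ord0; rewrite intr_eq0.
have sum_c : \sum_(i < 9) c i = 0.
  by rewrite -[RHS](rmorph0 intr) -weight_test_pts -sum_pts rmorph_sum.
have := csnd 9 _ c pt_inj c_nz sum_c.
have -> : \sum_(i < 9) \sum_(j < 9) c i * (c j)^* * ((path_metric S (amalgam_pt (pt i))
    (amalgam_pt (pt j)))%:R : R)%:C%C
  = (\sum_(i < 9) \sum_(j < 9) weight (pt i) * weight (pt j) * (amalgam_dist (pt i) (pt j))%:Z)%:~R.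
  rewrite rmorph_sum; apply: eq_bigr => i _; rewrite rmorph_sum; apply: eq_bigr => j _.
  by rewrite dist rmorph_int rmorph_nat pmulrn -!intrM.
rewrite (sum_pts _ (fun u => \sum_(j < 9) weight u * weight (pt j) * (amalgam_dist u (pt j))%:Z)).
under eq_bigr => u _ do rewrite (sum_pts _ (fun v => weight u * weight v * (amalgam_dist u v)%:Z)).
by rewrite amalgam_dist_form_test_pts ltxx.
Qed.

End Amalgam.

Theorem mainTheorem15 :
  exists (H G1 G2 : group) (j1 : H -> G1) (j2 : H -> G2)
         (S1 : G1 -> Prop) (S2 : G2 -> Prop),
    (is_hom j1 /\ injective j1) /\ (is_hom j2 /\ injective j2) /\
    generates S1 /\ generates S2 /\
    path_metric_CSND S1 /\ path_metric_CSND S2 /\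
        (forall (A : group) (i1 : G1 -> A) (i2 : G2 -> A),
          is_amalgam j1 j2 i1 i2 ->
          ~ path_metric_CSND (amalgam_gens i1 i2 S1 S2)).
Proof.
exists Z3, Z6, Z6, double, double, (fun _ => True), (fun _ => True).
have double_emb : is_hom double /\ injective double by split; [exact: double_hom | exact: double_inj].
split; first exact: double_emb.
split; first exact: double_emb.
split; first exact: generates_full.
split; first exact: generates_full.
split; first exact: path_metric_CSND_full.
split; first exact: path_metric_CSND_full.
by move=> A i1 i2 amalA; apply: amalgam_not_CSND.
Qed.
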